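(* Let $n\ge 1$ and $u,v\in\mathsf{Tr}(n)$. Let $s:=\min(u_1,v_1)\cdots\min(u_n,v_n)$ and let $t$ be the word obtained from $s$ by replacing, for every pair of indices $i<j$ with $s_i=0$ and $s_j=1$, the letter $s_j$ by $0$ (i.e. changing every subword $01$ of $s$ into $00$). Then $t$ is the meet of $u$ and $v$ in $(\mathsf{Tr}(n),\preccurlyeq)$.
   Context: A triword of size $n$ is a word $u=u_1\cdots u_n$ with $u_i\in\{0,1,2\}$, $u_1\ne 2$, and such that $u_i=0$ implies $u_j\neq 1$ for all $j>i$ (i.e. no subword $01$, where a subword is obtained by deleting letters); $\mathsf{Tr}(n)$ is their set, ordered componentwise: $u\preccurlyeq v$ iff $u_i\le v_i$ for all $i\in[n]$. *)

From mathcomp Require Import all_boot.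
Set Implicit Arguments. Unset Strict Implicit. Unset Printing Implicit Defensive.

(* Words are sequences of naturals; positions are 0-based (position i here
   is position i+1 in the paper). *)

Definition triword (n : nat) (u : seq nat) : Prop :=
  [/\ size u = n,
      (forall i, i < n -> nth 0 u i <= 2),
      (0 < n -> nth 0 u 0 != 2) &
      (forall i j, i < j -> j < n -> nth 0 u i = 0 -> nth 0 u j != 1)].

Definition word_le (n : nat) (u v : seq nat) : Prop :=
  forall i, i < n -> nth 0 u i <= nth 0 v i.

Definition word_min (u v : seq nat) : seq nat :=
  [seq minn p.1 p.2 | p <- zip u v].

Definition kill01 (s : seq nat) : seq nat :=
  [seq (if (nth 0 s j == 1) && has (fun i => nth 0 s i == 0) (iota 0 j)
        then 0 else nth 0 s j) | j <- iota 0 (size s)].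

Definition is_meet_Tr (n : nat) (u v m : seq nat) : Prop :=
  [/\ triword n m, word_le n m u, word_le n m v &
      forall w, triword n w -> word_le n w u -> word_le n w v -> word_le n w m].

From mathcomp Require Import all_boot zify.
Set Implicit Arguments. Unset Strict Implicit. Unset Printing Implicit Defensive.

(* The letterwise minimum [s] of two triwords is a lower bound with letters in
   {0,1,2} and first letter different from 2; its only defect is that it may
   contain a subword 01.  Killing those 1s yields a word below [s] without
   subword 01, hence a triword.  Conversely, a triword [w] below [s] already
   has a 0 wherever [s] does, so every killed 1 of [s] sits after a 0 of [w]
   and is matched by a letter of [w] that is at most 1 but not 1, i.e. 0. *)

Definition no01 (n : nat) (w : seq nat) : Prop :=
  forall i j, i < j -> j < n -> nth 0 w i = 0 -> nth 0 w j != 1.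

Lemma word_le_trans n u v w : word_le n u v -> word_le n v w -> word_le n u w.
Proof. by move=> uv vw i lt; apply: leq_trans (uv i lt) (vw i lt). Qed.

Lemma size_word_min u v : size (word_min u v) = minn (size u) (size v).
Proof. by rewrite size_map size_zip. Qed.

Lemma nth_word_min u v i : size u = size v ->
  nth 0 (word_min u v) i = minn (nth 0 u i) (nth 0 v i).
Proof.
move=> suv; have [lt | ge] := ltnP i (size u).
  by rewrite (nth_map (0, 0)) ?size_zip -?suv ?minnn // nth_zip.
by rewrite !nth_default ?size_word_min -?suv ?minnn.
Qed.

Lemma word_min_lel n u v : size u = size v -> word_le n (word_min u v) u.
Proof. by move=> suv i _; rewrite nth_word_min // geq_minl. Qed.

Lemma word_min_ler n u v : size u = size v -> word_le n (word_min u v) v.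
Proof. by move=> suv i _; rewrite nth_word_min // geq_minr. Qed.

Lemma word_le_min n u v w : size u = size v ->
  word_le n w u -> word_le n w v -> word_le n w (word_min u v).
Proof. by move=> suv wu wv i lt; rewrite nth_word_min // leq_min wu ?wv. Qed.

Lemma size_kill01 s : size (kill01 s) = size s.
Proof. by rewrite size_map size_iota. Qed.

Lemma nth_kill01 s j : nth 0 (kill01 s) j =
  if (nth 0 s j == 1) && has (fun i => nth 0 s i == 0) (iota 0 j)
  then 0 else nth 0 s j.
Proof.
have [lt | ge] := ltnP j (size s).
  by rewrite (nth_map 0) ?size_iota // nth_iota.
by rewrite !nth_default ?size_kill01 //; case: ifP.
Qed.

Lemma kill01_le n s : word_le n (kill01 s) s.
Proof. by move=> j _; rewrite nth_kill01; case: ifP. Qed.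

Lemma kill01_eq0 s i : nth 0 (kill01 s) i = 0 -> exists2 k, k <= i & nth 0 s k = 0.
Proof.
rewrite nth_kill01; case: ifP => [/andP[_ /hasP[k]] | _ si0]; last by exists i.
by rewrite mem_iota => /andP[_ /ltnW ki] /eqP; exists k.
Qed.

Lemma kill01_neq1_after0 s k j : k < j -> nth 0 s k = 0 -> nth 0 (kill01 s) j != 1.
Proof.
move=> kj sk0; have zero_before : has (fun i => nth 0 s i == 0) (iota 0 j).
  by apply/hasP; exists k; rewrite ?mem_iota ?sk0.
by rewrite nth_kill01 zero_before andbT; case: ifP => // /negbT.
Qed.

Lemma kill01_no01 n s : no01 n (kill01 s).
Proof.
move=> i j ij _ /kill01_eq0 [k ki sk0].
exact: kill01_neq1_after0 (leq_ltn_trans ki ij) sk0.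
Qed.

Lemma kill01_max n s w : word_le n w s -> no01 n w -> word_le n w (kill01 s).
Proof.
move=> ws nw j lt; rewrite nth_kill01.
case: ifP => [/andP[/eqP sj1 /hasP[k]] | _]; last exact: ws.
rewrite mem_iota => /andP[_ kj] /eqP sk0.
have wk0 : nth 0 w k = 0.
  by apply/eqP; rewrite -leqn0 -[X in _ <= X]sk0 ws // (ltn_trans kj).
have := nw k j kj lt wk0; have := ws j lt; rewrite sj1; lia.
Qed.

Lemma triword_of_le n u w :
  triword n u -> size w = n -> word_le n w u -> no01 n w -> triword n w.
Proof.
move=> [_ bu fu _] sw wu nw; split=> // [i lt | lt].
  exact: leq_trans (wu i lt) (bu i lt).
have := fu lt; have := bu 0 lt; have := wu 0 lt; lia.
Qed.

Theorem proposition1p5 (n : nat) (u v : seq nat) :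
  1 <= n -> triword n u -> triword n v ->
  is_meet_Tr n u v (kill01 (word_min u v)).
Proof.
move=> _ tu tv; have [su _ _ _] := tu; have [sv _ _ _] := tv.
have suv : size u = size v by rewrite su sv.
have t_le_s : word_le n (kill01 (word_min u v)) (word_min u v) := @kill01_le n _.
have t_le_u := word_le_trans t_le_s (word_min_lel suv).
split=> //.
- apply: triword_of_le tu _ t_le_u (@kill01_no01 n _).
  by rewrite size_kill01 size_word_min su sv minnn.
- exact: word_le_trans t_le_s (word_min_ler suv).
- move=> w [_ _ _ nw] wu wv.
  exact: kill01_max (word_le_min suv wu wv) nw.
Qed.
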